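(* Let $A\subseteq\mathbb{N}$. Then there exists a subset $B\subseteq A$ such that $B\in\mathcal{D}$ and $d(B)=\underline{\underline{d}}(A)$. Similarly, there exists a superset $C\supseteq A$ such that $C\in\mathcal{D}$ and $d(C)=\overline{\overline{d}}(A)$.
   Context: $\mathbb{N}=\{1,2,3,\dots\}$. For $A\subseteq\mathbb{N}$ let $A(n)=|A\cap[1,n]|$. Let $\mathcal{D}$ be the collection of all $A\subseteq\mathbb{N}$ for which the asymptotic density $d(A)=\lim_{n\to\infty}\frac{A(n)}{n}$ exists. Define $\underline{\underline{d}}(A)=\sup\{d(B);\ B\subseteq A,\ B\in\mathcal{D}\}$ and $\overline{\overline{d}}(A)=\inf\{d(C);\ C\supseteq A,\ C\in\mathcal{D}\}$. *)

From Stdlib Require Import Reals.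
Open Scope R_scope.

(* A subset A of N = {1,2,3,...} is represented by its indicator A : nat -> bool;
   the value at 0 is irrelevant (0 is never counted). *)

Fixpoint cnt (A : nat -> bool) (n : nat) : nat :=
  match n with
  | O => O
  | S m => (cnt A m + (if A (S m) then 1 else 0))%nat
  end.

Definition has_density (A : nat -> bool) (d : R) : Prop :=
  Un_cv (fun n => INR (cnt A n) / INR n) d.

Definition subsetN (B A : nat -> bool) : Prop :=
  forall n : nat, (1 <= n)%nat -> B n = true -> A n = true.

Definition is_lower_bound (E : R -> Prop) (m : R) : Prop :=
  forall x, E x -> m <= x.

Definition is_glb (E : R -> Prop) (m : R) : Prop :=
  is_lower_bound E m /\ (forall b, is_lower_bound E b -> b <= m).

Definition is_lower_dd (A : nat -> bool) (x : R) : Prop :=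
  is_lub (fun d => exists B, subsetN B A /\ has_density B d) x.

Definition is_upper_dd (A : nat -> bool) (x : R) : Prop :=
  is_glb (fun d => exists C, subsetN A C /\ has_density C d) x.

(* The lower density is attained by a greedy subset: fix s = sup { d(B) : B ⊆ A, B ∈ 𝒟 }
   and walk through A, taking n whenever the count stays at most s·n.  The count never
   exceeds s·n.  Conversely, let m ≤ n be the last time the greedy count was within 1 of
   its cap s·m; from m on every element of A is taken, so the greedy set gains at least as
   much as any B ⊆ A between m and n.  Comparing with a B whose density is close to s
   gives the matching lower bound.  The upper density follows by complementation. *)

From Stdlib Require Import Reals Lra Lia Classical.
Open Scope R_scope.

Lemma cnt_le (B : nat -> bool) (n : nat) : (cnt B n <= n)%nat.
Proof. induction n as [|n IH]; simpl; [lia|]. destruct (B (S n)); lia. Qed.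

Lemma has_density_linear_bounds (B : nat -> bool) (d : R) :
  has_density B d <->
  forall eps, 0 < eps -> exists K : R,
    forall n, (d - eps) * INR n - K <= INR (cnt B n) <= (d + eps) * INR n + K.
Proof.
  split.
  - intros HB eps Heps.
    destruct (HB eps Heps) as [N HN].
    (* below N the trivial bound 0 <= cnt B n <= n <= N suffices *)
    exists ((Rabs d + eps + 1) * INR N). intro n.
    pose proof (le_INR _ _ (cnt_le B n)) as Hcnt.
    pose proof (pos_INR (cnt B n)). pose proof (pos_INR N).
    pose proof (Rle_abs d). pose proof (Rle_abs (- d)). rewrite Rabs_Ropp in *.
    assert (HK0 : 0 <= (Rabs d + eps + 1) * INR N) by nra.
    destruct (Compare_dec.le_lt_dec (S N) n) as [HNn|HnN].
    + assert (Hn : 0 < INR n) by (apply lt_0_INR; lia).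
      specialize (HN n ltac:(lia)). unfold R_dist in HN. apply Rabs_def2 in HN.
      set (q := INR (cnt B n) / INR n) in HN.
      assert (Hq : INR (cnt B n) = q * INR n) by (unfold q; field; lra).
      assert (0 < (q - (d - eps)) * INR n) by (apply Rmult_lt_0_compat; lra).
      assert (0 < (d + eps - q) * INR n) by (apply Rmult_lt_0_compat; lra).
      rewrite Hq. split; lra.
    + apply le_S_n, le_INR in HnN. pose proof (pos_INR n). split; nra.
  - intros Hbounds eps Heps.
    destruct (Hbounds (eps / 2)) as [K HK]; [lra|].
    destruct (INR_unbounded (2 * Rabs K / eps)) as [N HN].
    exists (S N). intros n Hn. unfold R_dist.
    assert (Hn0 : 0 < INR n) by (apply lt_0_INR; lia).
    assert (HNn : INR N <= INR n) by (apply le_INR; lia).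
    assert (HKn : Rabs K < eps / 2 * INR n).
    { assert (2 * Rabs K = (2 * Rabs K / eps) * eps) by (field; lra). nra. }
    pose proof (Rle_abs K). pose proof (Rle_abs (- K)). rewrite Rabs_Ropp in *.
    destruct (HK n) as [Hlo Hhi].
    assert (Hq : INR (cnt B n) / INR n - d = (INR (cnt B n) - d * INR n) / INR n)
      by (field; lra).
    rewrite Hq. apply Rabs_def1.
    + apply Rmult_lt_reg_r with (INR n); [exact Hn0|].
      unfold Rdiv. rewrite Rmult_assoc, Rinv_l by lra. nra.
    + apply Rmult_lt_reg_r with (INR n); [exact Hn0|].
      unfold Rdiv. rewrite Rmult_assoc, Rinv_l by lra. nra.
Qed.

Lemma density_le_1 (B : nat -> bool) (d : R) : has_density B d -> d <= 1.
Proof.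
  intro HB. apply Rnot_lt_le. intro Hd.
  destruct (proj1 (has_density_linear_bounds B d) HB ((d - 1) / 2)) as [K HK]; [lra|].
  destruct (INR_unbounded (2 * Rabs K / (d - 1))) as [n Hn].
  pose proof (le_INR _ _ (cnt_le B n)). pose proof (pos_INR n).
  pose proof (Rle_abs K). pose proof (Rle_abs (- K)). rewrite Rabs_Ropp in *.
  assert (2 * Rabs K = (2 * Rabs K / (d - 1)) * (d - 1)) by (field; lra).
  destruct (HK n). nra.
Qed.

Lemma cnt_empty (n : nat) : cnt (fun _ => false) n = O.
Proof. induction n as [|n IH]; simpl; [reflexivity|]. rewrite IH. reflexivity. Qed.

Lemma has_density_empty : has_density (fun _ => false) 0.
Proof.
  intros eps Heps. exists O. intros n _. unfold R_dist.
  rewrite cnt_empty. simpl INR. unfold Rdiv. rewrite Rmult_0_l, Rminus_0_r, Rabs_R0.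
  exact Heps.
Qed.

Lemma subsetN_empty (A : nat -> bool) : subsetN (fun _ => false) A.
Proof. intros n _ H. discriminate. Qed.

Lemma is_lub_approx (E : R -> Prop) (s eps : R) :
  is_lub E s -> 0 < eps -> exists x, E x /\ s - eps < x.
Proof.
  intros [_ Hleast] Heps. apply NNPP. intro Hno.
  assert (s <= s - eps); [|lra].
  apply Hleast. intros x Hx. apply Rnot_lt_le. intro. apply Hno. now exists x.
Qed.

Section Greedy.

Variables (A : nat -> bool) (s : R).

Definition greedy_step (m c : nat) : bool :=
  A (S m) && (if Rle_dec (INR c + 1) (s * INR (S m)) then true else false).

Fixpoint greedy_cnt (n : nat) : nat :=
  match n with
  | O => O
  | S m => (greedy_cnt m + (if greedy_step m (greedy_cnt m) then 1 else 0))%nat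
  end.

Definition greedy (n : nat) : bool :=
  match n with O => false | S m => greedy_step m (greedy_cnt m) end.

Lemma cnt_greedy (n : nat) : cnt greedy n = greedy_cnt n.
Proof. induction n as [|n IH]; simpl; [reflexivity|]. rewrite IH. reflexivity. Qed.

Lemma greedy_subsetN : subsetN greedy A.
Proof.
  intros [|n] Hn H; [lia|]. simpl in H. unfold greedy_step in H.
  now apply andb_prop in H.
Qed.

Lemma greedy_cnt_le (n : nat) : 0 <= s -> INR (greedy_cnt n) <= s * INR n.
Proof.
  intro Hs. induction n as [|n IH]; simpl greedy_cnt; [simpl; lra|].
  destruct (greedy_step n (greedy_cnt n)) eqn:Hstep.
  - unfold greedy_step in Hstep. apply andb_prop in Hstep. destruct Hstep as [_ Hle].
    destruct (Rle_dec _ _) as [Hle'|]; [|discriminate].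
    rewrite plus_INR. exact Hle'.
  - rewrite Nat.add_0_r, S_INR. nra.
Qed.

Lemma greedy_catch_up (B : nat -> bool) : subsetN B A ->
  forall n, exists m, (m <= n)%nat /\ s * INR m - 1 <= INR (greedy_cnt m) /\
    (greedy_cnt m + cnt B n <= greedy_cnt n + cnt B m)%nat.
Proof.
  intros HBA n. induction n as [|n IH].
  - exists O. simpl. split; [lia|]. split; [lra|lia].
  - destruct (Rle_dec (s * INR (S n) - 1) (INR (greedy_cnt (S n)))) as [Hsat|Hunsat].
    + exists (S n). split; [lia|]. split; [exact Hsat|lia].
    + destruct IH as [m [Hmn [Hm Hgain]]]. exists m.
      split; [lia|]. split; [exact Hm|].
      simpl greedy_cnt. simpl cnt.
      destruct (B (S n)) eqn:HB; [|lia].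
      (* the greedy set is below its cap at S n, so it takes S n ∈ A *)
      assert (Hstep : greedy_step n (greedy_cnt n) = true).
      { unfold greedy_step. rewrite (HBA (S n)) by (lia || exact HB).
        destruct (Rle_dec _ _) as [|Hno]; [reflexivity|].
        exfalso. apply Hunsat. apply Rnot_le_lt in Hno.
        assert (INR (greedy_cnt n) <= INR (greedy_cnt (S n))) by (apply le_INR; simpl; lia).
        lra. }
      rewrite Hstep. lia.
Qed.

Lemma greedy_has_density :
  is_lub (fun d => exists B, subsetN B A /\ has_density B d) s -> 0 <= s ->
  has_density greedy s.
Proof.
  intros Hs Hs0. apply has_density_linear_bounds. intros eps Heps.
  destruct (is_lub_approx _ _ (eps / 2) Hs) as [d [[B [HBA HB]] Hd]]; [lra|].
  assert (Hds : d <= s) by (apply (proj1 Hs); now exists B).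
  destruct (proj1 (has_density_linear_bounds B d) HB (eps / 4)) as [K HK]; [lra|].
  assert (HK0 : 0 <= K) by (destruct (HK O) as [H _]; simpl in H; lra).
  exists (1 + 2 * K). intro n. rewrite cnt_greedy.
  pose proof (greedy_cnt_le n Hs0). pose proof (pos_INR n).
  split; [|nra].
  destruct (greedy_catch_up B HBA n) as [m [Hmn [Hm Hgain]]].
  apply le_INR in Hgain. rewrite !plus_INR in Hgain.
  destruct (HK n) as [HBn _]. destruct (HK m) as [_ HBm].
  assert (eps / 4 * INR m <= eps / 4 * INR n)
    by (apply Rmult_le_compat_l; [lra | now apply le_INR]).
  assert (0 <= (s - d) * INR m) by (apply Rmult_le_pos; [lra|apply pos_INR]).
  nra.
Qed.

End Greedy.

Lemma lower_dd_attained (A : nat -> bool) :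
  exists (B : nat -> bool) (x : R),
    subsetN B A /\ has_density B x /\ is_lower_dd A x.
Proof.
  destruct (completeness (fun d => exists B, subsetN B A /\ has_density B d))
    as [s Hs].
  - exists 1. intros d [B [_ HB]]. exact (density_le_1 B d HB).
  - exists 0, (fun _ => false). split; [apply subsetN_empty|exact has_density_empty].
  - assert (Hs0 : 0 <= s).
    { apply (proj1 Hs). exists (fun _ => false).
      split; [apply subsetN_empty|exact has_density_empty]. }
    exists (greedy A s), s.
    split; [apply greedy_subsetN|split; [now apply greedy_has_density|exact Hs]].
Qed.

Definition complN (A : nat -> bool) : nat -> bool := fun n => negb (A n).

Lemma subsetN_complN (A C : nat -> bool) :
  subsetN A C -> subsetN (complN C) (complN A).
Proof.
  intros HAC n Hn. unfold complN. destruct (A n) eqn:HA; [|reflexivity].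
  now rewrite (HAC n Hn HA).
Qed.

Lemma subsetN_complN_r (A B : nat -> bool) :
  subsetN B (complN A) -> subsetN A (complN B).
Proof.
  intros HBA n Hn HA. unfold complN. destruct (B n) eqn:HB; [|reflexivity].
  specialize (HBA n Hn HB). unfold complN in HBA. now rewrite HA in HBA.
Qed.

Lemma cnt_complN (B : nat -> bool) (n : nat) : (cnt (complN B) n + cnt B n = n)%nat.
Proof.
  induction n as [|n IH]; simpl; [reflexivity|]. unfold complN at 2.
  destruct (B (S n)); simpl; lia.
Qed.

Lemma has_density_complN (B : nat -> bool) (d : R) :
  has_density B d -> has_density (complN B) (1 - d).
Proof.
  intros HB eps Heps. destruct (HB eps Heps) as [N HN]. exists (S N). intros n Hn.
  specialize (HN n ltac:(lia)). unfold R_dist in *.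
  assert (Hn0 : 0 < INR n) by (apply lt_0_INR; lia).
  pose proof (f_equal INR (cnt_complN B n)) as Hc. rewrite plus_INR in Hc.
  replace (INR (cnt (complN B) n)) with (INR n - INR (cnt B n)) by lra.
  replace ((INR n - INR (cnt B n)) / INR n - (1 - d))
    with (- (INR (cnt B n) / INR n - d)) by (field; lra).
  now rewrite Rabs_Ropp.
Qed.

Lemma upper_dd_complN (A : nat -> bool) (x : R) :
  is_lower_dd (complN A) x -> is_upper_dd A (1 - x).
Proof.
  intros [Hub Hleast]. split.
  - intros d [C [HAC HC]].
    assert (1 - d <= x); [|lra].
    apply Hub. exists (complN C).
    split; [now apply subsetN_complN | now apply has_density_complN].
  - intros b Hb. assert (x <= 1 - b); [|lra].
    apply Hleast. intros e [B [HBA HB]]. assert (b <= 1 - e); [|lra].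
    apply Hb. exists (complN B).
    split; [now apply subsetN_complN_r | now apply has_density_complN].
Qed.

Theorem lemma3p7 (A : nat -> bool) :
  (exists (B : nat -> bool) (x : R),
      subsetN B A /\ has_density B x /\ is_lower_dd A x) /\
  (exists (C : nat -> bool) (y : R),
      subsetN A C /\ has_density C y /\ is_upper_dd A y).
Proof.
  split; [apply lower_dd_attained|].
  destruct (lower_dd_attained (complN A)) as [B [x [HBA [HB Hx]]]].
  exists (complN B), (1 - x). split; [now apply subsetN_complN_r|].
  split; [now apply has_density_complN | now apply upper_dd_complN].
Qed.
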